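(* Let $r>\frac12$ and let $y(s,r)=s+\mathop{K}_{n=1}^{\infty}\left(\dfrac{(2n-1)^2r^2-(r-1)^2}{2s}\right)$ for $s>0$; this is a positive continuous function with $y(s,r)>s$ and $y(s,r)\,y(s+2r,r)=(s+1)(s+2r-1)$ for $s>0$. Then the functional equation $$f(s,r)+f(s+2r,r)=-\frac{1}{(s+1)^2}-\frac{1}{(s+2r-1)^2}\qquad(s>0)$$ has a unique solution satisfying $\lim_{s\to\infty}f(s,r)=0$, and this solution is $f(s,r)=\frac{\partial^2}{\partial s^2}(\ln y)(s,r)$.
   Context: $\mathop{K}_{n=1}^{\infty}\left(\frac{a_n}{b}\right)$ denotes the continued fraction $\cfrac{a_1}{b+\cfrac{a_2}{b+\cdots}}$ (limit of convergents). *)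

From Stdlib Require Import Reals.
From Coquelicot Require Import Coquelicot.
Open Scope R_scope.

Fixpoint cf_tail (a : nat -> R) (b : R) (k m : nat) : R :=
  match m with
  | O => 0
  | S m' => a k / (b + cf_tail a b (S k) m')
  end.

(* n-th convergent of K_{n=1}^oo (a_n / b) = a_1/(b + a_2/(b + ... + a_n/b)). *)
Definition cf_conv (a : nat -> R) (b : R) (n : nat) : R := cf_tail a b 1 n.

Definition y_num (r : R) (n : nat) : R :=
  (2 * INR n - 1) ^ 2 * r ^ 2 - (r - 1) ^ 2.

Definition rhs (r s : R) : R := - / (s + 1) ^ 2 - / (s + 2 * r - 1) ^ 2.

From Stdlib Require Import Reals Lra.
From Coquelicot Require Import Coquelicot.
Open Scope R_scope.

(* Taking logarithms, g := ln y solves g(s) + g(s + 2r) = ln((s + 1)(s + 2r - 1)),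
   and s < y(s) < s + 1 gives 0 < g(s) - ln s < 1/s.  Telescoping the equation over the
   nodes s + 4kr therefore writes g as the uniform limit of the alternating sums
   Σ_{k<n} (ρ(s + 4kr) - ρ(s + 4kr + 2r)) + ln(s + 4nr), ρ the right-hand side.  Their first
   and second derivatives are alternating sums of the same shape built from monotone functions
   of size O(1/s), so they converge uniformly as well; hence g is twice differentiable with
   termwise derivatives, g'' satisfies the differentiated equation, and |g''(s)| = O(1/s).
   Uniqueness: the difference of two solutions is 2r-antiperiodic and tends to 0, so it
   vanishes. *)

Lemma is_derive_shift (f : R -> R) (a t l : R) :
  is_derive f (t + a) l -> is_derive (fun u => f (u + a)) t l.
Proof.
  intro Hf.
  assert (Hs : is_derive (fun u : R => u + a) t 1) by (auto_derive; auto; ring).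
  pose proof (is_derive_comp f (fun u => u + a) t l 1 Hf Hs) as H.
  replace l with (scal 1 l); [exact H |].
  unfold scal; simpl; unfold mult; simpl; ring.
Qed.

Lemma locally_pos (x : R) : 0 < x -> locally x (fun u => 0 < u).
Proof. intro hx. exact (open_gt 0 x hx). Qed.

Lemma exists_nat_mul_gt (c M : R) :
  0 < c -> exists N, forall n, (N <= n)%nat -> M < INR n * c.
Proof.
  intro hc. destruct (INR_unbounded (M / c)) as [N HN].
  exists N. intros n Hn. apply le_INR in Hn.
  apply Rlt_div_l; [exact hc | lra].
Qed.

Lemma div_lt_of_div_lt (K t eps : R) : 0 < eps -> 0 < t -> K / eps < t -> K / t < eps.
Proof.
  intros he ht H. apply Rlt_div_l; [exact ht |].
  apply Rlt_div_l in H; [lra | exact he].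
Qed.

Lemma is_lim_p_infty_0_of_bound (f : R -> R) (K : R) :
  (forall s, 1 <= s -> Rabs (f s) <= K / s) -> is_lim f p_infty 0.
Proof.
  intro Hf. apply is_lim_spec. intro eps. simpl.
  pose proof (cond_pos eps) as he.
  exists (Rmax 1 (K / eps)). intros s Hs.
  pose proof (Rmax_l 1 (K / eps)). pose proof (Rmax_r 1 (K / eps)).
  rewrite Rminus_0_r.
  pose proof (div_lt_of_div_lt K s eps he ltac:(lra) ltac:(lra)).
  pose proof (Hf s ltac:(lra)). lra.
Qed.

Lemma antiperiodic_vanishing (h : R -> R) (c : R) :
  0 < c -> (forall t, 0 < t -> h (t + c) = - h t) -> is_lim h p_infty 0 ->
  forall t, 0 < t -> h t = 0.
Proof.
  intros hc Hh Hlim t ht.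
  assert (Horbit : forall k, Rabs (h (t + INR k * c)) = Rabs (h t)).
  { induction k as [| k IH].
    - simpl. rewrite Rmult_0_l, Rplus_0_r. reflexivity.
    - rewrite S_INR, <- IH.
      replace (t + (INR k + 1) * c) with (t + INR k * c + c) by ring.
      rewrite Hh, Rabs_Ropp; [reflexivity |].
      pose proof (pos_INR k). nra. }
  destruct (Req_dec (h t) 0) as [E | E]; [exact E | exfalso].
  apply is_lim_spec in Hlim.
  destruct (Hlim (mkposreal _ (Rabs_pos_lt _ E))) as [M HM].
  destruct (exists_nat_mul_gt c (M - t) hc) as [N HN].
  specialize (HM (t + INR N * c) ltac:(pose proof (HN N (le_n N)); lra)).
  simpl in HM. rewrite Rminus_0_r, Horbit in HM. lra.
Qed.

Definition lim_fun (fn : nat -> R -> R) (x : R) : R := real (Lim_seq (fun n => fn n x)).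

Lemma uniform_approx_CVU (fn : nat -> R -> R) (g : R -> R) (D : R -> Prop) :
  (forall eps : posreal, exists N, forall n x, (N <= n)%nat -> D x -> Rabs (fn n x - g x) < eps) ->
  CVU_dom fn D /\ (forall x, D x -> lim_fun fn x = g x).
Proof.
  intro H.
  assert (Hlim : forall x, D x -> is_lim_seq (fun n => fn n x) (g x)).
  { intros x Dx. apply is_lim_seq_spec. intro eps.
    destruct (H eps) as [N HN]. exists N. intros n Hn. apply HN; auto. }
  split.
  - intro eps. destruct (H eps) as [N HN]. exists N. intros n Hn x Dx.
    rewrite (is_lim_seq_unique _ _ (Hlim x Dx)). apply HN; auto.
  - intros x Dx. unfold lim_fun. rewrite (is_lim_seq_unique _ _ (Hlim x Dx)). reflexivity.
Qed.

Lemma lim_fun_abs_le (fn : nat -> R -> R) (D : R -> Prop) (x B : R) :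
  CVU_dom fn D -> D x -> (forall n, Rabs (fn n x) <= B) -> Rabs (lim_fun fn x) <= B.
Proof.
  intros C Dx HB.
  destruct (CVU_CVS_dom _ _ C x Dx) as [l Hl].
  unfold lim_fun. rewrite (is_lim_seq_unique _ _ Hl).
  apply is_lim_seq_abs in Hl.
  exact (is_lim_seq_le _ _ _ _ HB Hl (is_lim_seq_const B)).
Qed.

Lemma is_derive_lim_fun (fn fn' fn'' : nat -> R -> R) (x : R) :
  (forall n t, 0 < t -> is_derive (fn n) t (fn' n t)) ->
  (forall n t, 0 < t -> is_derive (fn' n) t (fn'' n t)) ->
  CVU_dom fn (fun t => 0 < t) -> CVU_dom fn' (fun t => 0 < t) -> 0 < x ->
  is_derive (lim_fun fn) x (lim_fun fn' x).
Proof.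
  (* fn'' only serves to make each fn' n continuous, as CVU_Derive requires. *)
  intros H1 H2 C1 C2 hx. unfold lim_fun.
  assert (HD : forall n t, 0 < t -> Derive (fn n) t = fn' n t)
    by (intros; apply is_derive_unique; auto).
  rewrite <- (Lim_seq_ext (fun n => Derive (fn n) x)) by (intro; apply HD; auto).
  apply (CVU_Derive fn (fun t => 0 < t)); auto.
  - apply open_gt.
  - intros a b z Ha Hb Hz. lra.
  - intros n t ht. eexists. apply H1; auto.
  - intros n t ht.
    apply (continuity_pt_ext_loc (fn' n)).
    + apply (filter_imp (fun u => 0 < u)); [| apply locally_pos; auto].
      intros u hu. symmetry. apply HD; auto.
    + apply continuity_pt_filterlim, (ex_derive_continuous (fn' n)).
      eexists. apply H2; auto.
  - intro eps. destruct (C2 eps) as [N HN]. exists N. intros n Hn t ht.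
    rewrite HD by auto.
    rewrite <- (Lim_seq_ext (fun n => fn' n t)) by (intro; symmetry; apply HD; auto).
    apply HN; auto.
Qed.

Lemma is_derive_fe (g g' a a' : R -> R) (c : R) :
  0 < c ->
  (forall t, 0 < t -> is_derive g t (g' t)) ->
  (forall t, 0 < t -> is_derive a t (a' t)) ->
  (forall t, 0 < t -> g t + g (t + c) = a t) ->
  forall t, 0 < t -> g' t + g' (t + c) = a' t.
Proof.
  intros hc Hg Ha Hfe t ht.
  assert (H : is_derive a t (g' t + g' (t + c))).
  { apply (is_derive_ext_loc (fun u => g u + g (u + c))).
    - apply (filter_imp (fun u => 0 < u)); [| apply locally_pos; auto].
      intros u hu. apply Hfe; auto.
    - apply (is_derive_plus g (fun u => g (u + c))).
      + apply Hg; auto.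
      + apply is_derive_shift, Hg. lra. }
  rewrite <- (is_derive_unique _ _ _ H). apply is_derive_unique, Ha; auto.
Qed.

Section AlternatingSums.

Variable c : R.

Fixpoint alt_sum (a : R -> R) (n : nat) (x : R) : R :=
  match n with
  | O => 0
  | S k => alt_sum a k x + (a (x + INR k * (2 * c)) - a (x + INR k * (2 * c) + c))
  end.

(* If g t + g (t + c) = a t, then alt_approx a b n x = g x - g t_n + b t_n with
   t_n = x + 2nc (alt_sum_telescope), which tends to g x when g - b vanishes at infinity. *)
Definition alt_approx (a b : R -> R) (n : nat) (x : R) : R :=
  alt_sum a n x + b (x + INR n * (2 * c)).

Definition monotonic_pos (a : R -> R) : Prop :=
  (forall u v, 0 < u -> u <= v -> a v <= a u) \/
  (forall u v, 0 < u -> u <= v -> a u <= a v).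

Hypothesis c_pos : 0 < c.

Lemma alt_node_pos (n : nat) (x : R) : 0 < x -> 0 < x + INR n * (2 * c).
Proof. intro hx. pose proof (pos_INR n). nra. Qed.

Lemma alt_node_le (n m : nat) (x : R) :
  (n <= m)%nat -> x + INR n * (2 * c) <= x + INR m * (2 * c).
Proof. intro Hnm. apply le_INR in Hnm. nra. Qed.

Lemma alt_sum_telescope (g a : R -> R) (n : nat) (x : R) :
  (forall t, 0 < t -> g t + g (t + c) = a t) -> 0 < x ->
  alt_sum a n x = g x - g (x + INR n * (2 * c)).
Proof.
  intros Hfe hx. induction n as [| k IH]; simpl alt_sum.
  - simpl. rewrite Rmult_0_l, Rplus_0_r. ring.
  - pose proof (alt_node_pos k x hx) as Hk.
    rewrite IH, <- !Hfe by lra. rewrite S_INR.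
    replace (x + (INR k + 1) * (2 * c)) with (x + INR k * (2 * c) + c + c) by ring.
    ring.
Qed.

Lemma alt_sum_is_derive (a a' : R -> R) (n : nat) (x : R) :
  (forall t, 0 < t -> is_derive a t (a' t)) -> 0 < x ->
  is_derive (alt_sum a n) x (alt_sum a' n x).
Proof.
  intros Ha hx. induction n as [| k IH]; simpl.
  - apply (is_derive_const (K := R_AbsRing) (V := R_NormedModule) 0).
  - pose proof (alt_node_pos k x hx).
    apply (is_derive_plus (alt_sum a k)); [exact IH |].
    apply (is_derive_minus (fun u => a (u + INR k * (2 * c)))
             (fun u => a (u + INR k * (2 * c) + c))).
    + apply is_derive_shift, Ha. lra.
    + apply (is_derive_shift (fun v => a (v + c))), is_derive_shift, Ha. lra.
Qed.

Lemma alt_approx_is_derive (a a' b b' : R -> R) (n : nat) (x : R) :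
  (forall t, 0 < t -> is_derive a t (a' t)) ->
  (forall t, 0 < t -> is_derive b t (b' t)) -> 0 < x ->
  is_derive (alt_approx a b n) x (alt_approx a' b' n x).
Proof.
  intros Ha Hb hx. unfold alt_approx.
  apply (is_derive_plus (alt_sum a n) (fun u => b (u + INR n * (2 * c)))).
  - apply alt_sum_is_derive; auto.
  - apply is_derive_shift, Hb, alt_node_pos, hx.
Qed.

(* The increments are consecutive differences along the interleaved nodes
   x + 2kc, x + 2kc + c, ..., so they have one sign and sum to at most the total variation. *)
Lemma alt_sum_tail_antitone (a : R -> R) (n m : nat) (x : R) :
  (forall u v, 0 < u -> u <= v -> a v <= a u) -> (n <= m)%nat -> 0 < x ->
  0 <= alt_sum a m x - alt_sum a n x
    <= a (x + INR n * (2 * c)) - a (x + INR m * (2 * c)).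
Proof.
  intros Ha Hnm hx. induction Hnm as [| m Hnm IH]; [lra |].
  simpl alt_sum. rewrite S_INR.
  pose proof (alt_node_pos m x hx).
  replace (x + (INR m + 1) * (2 * c)) with (x + INR m * (2 * c) + c + c) by ring.
  assert (a (x + INR m * (2 * c) + c) <= a (x + INR m * (2 * c))) by (apply Ha; lra).
  assert (a (x + INR m * (2 * c) + c + c) <= a (x + INR m * (2 * c) + c)) by (apply Ha; lra).
  lra.
Qed.

Lemma alt_sum_opp (a : R -> R) (n : nat) (x : R) :
  alt_sum (fun t => - a t) n x = - alt_sum a n x.
Proof. induction n as [| k IH]; simpl; [ring | rewrite IH; ring]. Qed.

Lemma alt_sum_tail_abs (a : R -> R) (n m : nat) (x : R) :
  monotonic_pos a -> (n <= m)%nat -> 0 < x ->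
  Rabs (alt_sum a m x - alt_sum a n x)
    <= Rabs (a (x + INR n * (2 * c))) + Rabs (a (x + INR m * (2 * c))).
Proof.
  intros Ha Hnm hx.
  set (an := a (x + INR n * (2 * c))). set (am := a (x + INR m * (2 * c))).
  pose proof (Rle_abs an). pose proof (Rabs_maj2 an).
  pose proof (Rle_abs am). pose proof (Rabs_maj2 am).
  apply Rabs_le. destruct Ha as [Ha | Ha].
  - pose proof (alt_sum_tail_antitone a n m x Ha Hnm hx) as T. fold an am in T. lra.
  - assert (Ha' : forall u v, 0 < u -> u <= v -> - a v <= - a u)
      by (intros u v hu huv; apply Ropp_le_contravar, Ha; auto).
    pose proof (alt_sum_tail_antitone (fun t => - a t) n m x Ha' Hnm hx) as T.
    rewrite !alt_sum_opp in T. fold an am in T. lra.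
Qed.

Section Bounded.

Variables (a b : R -> R) (K : R).
Hypothesis a_monotonic : monotonic_pos a.
Hypothesis a_bound : forall t, 1 <= t -> Rabs (a t) <= K / t.
Hypothesis b_bound : forall t, 1 <= t -> Rabs (b t) <= K / t.

Lemma alt_approx_diff_bound (n m : nat) (x : R) :
  (n <= m)%nat -> 0 < x -> 1 <= x + INR n * (2 * c) ->
  Rabs (alt_approx a b m x - alt_approx a b n x) <= 4 * K / (x + INR n * (2 * c)).
Proof.
  intros Hnm hx Hn.
  pose proof (alt_node_le n m x Hnm) as Hle.
  set (tn := x + INR n * (2 * c)) in *. set (tm := x + INR m * (2 * c)) in *.
  assert (HK : 0 <= K) by (pose proof (a_bound 1 (Rle_refl 1)) as H1;
                           pose proof (Rabs_pos (a 1)); unfold Rdiv in H1; lra).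
  assert (Hmn : K / tm <= K / tn).
  { unfold Rdiv. apply Rmult_le_compat_l; [exact HK |].
    apply Rinv_le_contravar; lra. }
  pose proof (alt_sum_tail_abs a n m x a_monotonic Hnm hx) as T. fold tn tm in T.
  pose proof (a_bound tn Hn). pose proof (a_bound tm ltac:(lra)).
  pose proof (b_bound tn Hn). pose proof (b_bound tm ltac:(lra)).
  unfold alt_approx. fold tn tm.
  set (d := alt_sum a m x - alt_sum a n x) in T.
  replace (alt_sum a m x + b tm - (alt_sum a n x + b tn)) with (d + b tm - b tn)
    by (unfold d; ring).
  pose proof (Rabs_triang (d + b tm) (- b tn)) as T1.
  pose proof (Rabs_triang d (b tm)) as T2.
  rewrite Rabs_Ropp in T1.
  replace (4 * K / tn) with (K / tn + K / tn + K / tn + K / tn) by (unfold Rdiv; ring).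
  unfold Rminus. lra.
Qed.

Lemma alt_approx_abs_le (n : nat) (x : R) :
  1 <= x -> Rabs (alt_approx a b n x) <= 5 * K / x.
Proof.
  intro hx.
  pose proof (alt_approx_diff_bound 0 n x (Nat.le_0_l n) ltac:(lra)) as D.
  unfold alt_approx at 2 in D. simpl alt_sum in D.
  rewrite Rmult_0_l, !Rplus_0_r, Rplus_0_l in D.
  specialize (D ltac:(lra)).
  pose proof (b_bound x hx).
  pose proof (Rabs_triang (alt_approx a b n x - b x) (b x)) as T.
  replace (alt_approx a b n x - b x + b x) with (alt_approx a b n x) in T by ring.
  replace (5 * K / x) with (4 * K / x + K / x) by (unfold Rdiv; ring). lra.
Qed.

Lemma alt_approx_CVU : CVU_dom (alt_approx a b) (fun x => 0 < x).
Proof.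
  apply CVU_dom_cauchy. intro eps. pose proof (cond_pos eps) as he.
  destruct (exists_nat_mul_gt (2 * c) (Rmax 1 (4 * K / eps)) ltac:(lra)) as [N HN].
  pose proof (Rmax_l 1 (4 * K / eps)). pose proof (Rmax_r 1 (4 * K / eps)).
  assert (Hclose : forall n m x, 0 < x -> (N <= n)%nat -> (n <= m)%nat ->
            Rabs (alt_approx a b m x - alt_approx a b n x) < eps).
  { intros n m x hx HNn Hnm. pose proof (HN n HNn).
    eapply Rle_lt_trans; [apply alt_approx_diff_bound; auto; lra |].
    apply div_lt_of_div_lt; lra. }
  exists N. intros n m x hx Hn Hm.
  destruct (Nat.le_ge_cases n m) as [Hnm | Hmn].
  - rewrite Rabs_minus_sym. auto.
  - auto.
Qed.

End Bounded.

End AlternatingSums.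

Definition rhs0 (r t : R) : R := ln (t + 1) + ln (t + 2 * r - 1).
Definition rhs1 (r t : R) : R := / (t + 1) + / (t + 2 * r - 1).
Definition rhs3 (r t : R) : R := 2 * (/ (t + 1) ^ 3 + / (t + 2 * r - 1) ^ 3).

Lemma inv_abs_le (t : R) : 1 <= t -> Rabs (/ t) <= 2 / t.
Proof.
  intro ht. pose proof (Rinv_0_lt_compat t ltac:(lra)).
  rewrite Rabs_pos_eq by lra. unfold Rdiv. lra.
Qed.

Lemma inv_sq_abs_le (t : R) : 1 <= t -> Rabs (- / t ^ 2) <= 2 / t.
Proof.
  intro ht. rewrite Rabs_Ropp.
  assert (0 < / t ^ 2 <= / t)
    by (split; [apply Rinv_0_lt_compat, pow_lt | apply Rinv_le_contravar]; nra).
  rewrite Rabs_pos_eq by lra. unfold Rdiv. lra.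
Qed.

Section RightHandSides.

Variable r : R.
Hypothesis hr : / 2 < r.

Lemma rhs0_is_derive (t : R) : 0 < t -> is_derive (rhs0 r) t (rhs1 r t).
Proof.
  intro ht. unfold rhs0, rhs1. auto_derive.
  - repeat split; lra.
  - field. lra.
Qed.

Lemma rhs1_is_derive (t : R) : 0 < t -> is_derive (rhs1 r) t (rhs r t).
Proof.
  intro ht. unfold rhs1, rhs. auto_derive.
  - repeat split; lra.
  - field. lra.
Qed.

Lemma rhs_is_derive (t : R) : 0 < t -> is_derive (rhs r) t (rhs3 r t).
Proof.
  intro ht. unfold rhs, rhs3. auto_derive.
  - repeat split; intro H; nra.
  - field. lra.
Qed.

Lemma rhs1_antitone (u v : R) : 0 < u -> u <= v -> rhs1 r v <= rhs1 r u.
Proof.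
  intros hu huv. unfold rhs1.
  assert (/ (v + 1) <= / (u + 1)) by (apply Rinv_le_contravar; lra).
  assert (/ (v + 2 * r - 1) <= / (u + 2 * r - 1)) by (apply Rinv_le_contravar; lra).
  lra.
Qed.

Lemma rhs_monotone (u v : R) : 0 < u -> u <= v -> rhs r u <= rhs r v.
Proof.
  intros hu huv. unfold rhs.
  assert (/ (v + 1) ^ 2 <= / (u + 1) ^ 2)
    by (apply Rinv_le_contravar; [apply pow_lt; lra | nra]).
  assert (/ (v + 2 * r - 1) ^ 2 <= / (u + 2 * r - 1) ^ 2)
    by (apply Rinv_le_contravar; [apply pow_lt; lra | nra]).
  lra.
Qed.

Lemma rhs1_abs_le (t : R) : 1 <= t -> Rabs (rhs1 r t) <= 2 / t.
Proof.
  intro ht. unfold rhs1.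
  assert (0 < / (t + 1) <= / t)
    by (split; [apply Rinv_0_lt_compat | apply Rinv_le_contravar]; lra).
  assert (0 < / (t + 2 * r - 1) <= / t)
    by (split; [apply Rinv_0_lt_compat | apply Rinv_le_contravar]; lra).
  unfold Rdiv. apply Rabs_le. lra.
Qed.

Lemma rhs_abs_le (t : R) : 1 <= t -> Rabs (rhs r t) <= 2 / t.
Proof.
  intro ht. unfold rhs.
  assert (0 < / (t + 1) ^ 2 <= / t)
    by (split; [apply Rinv_0_lt_compat, pow_lt | apply Rinv_le_contravar]; nra).
  assert (0 < / (t + 2 * r - 1) ^ 2 <= / t)
    by (split; [apply Rinv_0_lt_compat, pow_lt | apply Rinv_le_contravar]; nra).
  unfold Rdiv. apply Rabs_le. lra.
Qed.

Lemma rhs1_approx_CVU : CVU_dom (alt_approx (2 * r) (rhs1 r) Rinv) (fun x => 0 < x).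
Proof.
  apply (alt_approx_CVU (2 * r) ltac:(lra) _ _ 2); [left; apply rhs1_antitone | |];
    intros; [apply rhs1_abs_le | apply inv_abs_le]; lra.
Qed.

Lemma rhs_approx_CVU :
  CVU_dom (alt_approx (2 * r) (rhs r) (fun t => - / t ^ 2)) (fun x => 0 < x).
Proof.
  apply (alt_approx_CVU (2 * r) ltac:(lra) _ _ 2); [right; apply rhs_monotone | |];
    intros; [apply rhs_abs_le | apply inv_sq_abs_le]; lra.
Qed.

Lemma rhs_approx_abs_le (n : nat) (x : R) :
  1 <= x -> Rabs (alt_approx (2 * r) (rhs r) (fun t => - / t ^ 2) n x) <= 5 * 2 / x.
Proof.
  intro hx. apply (alt_approx_abs_le (2 * r) ltac:(lra)); auto; [right; apply rhs_monotone | |];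
    intros; [apply rhs_abs_le | apply inv_sq_abs_le]; lra.
Qed.

Lemma rhs0_approx_is_derive (n : nat) (x : R) :
  0 < x -> is_derive (alt_approx (2 * r) (rhs0 r) ln n) x
             (alt_approx (2 * r) (rhs1 r) Rinv n x).
Proof.
  intro hx. apply alt_approx_is_derive; auto; [lra | |].
  - intros; apply rhs0_is_derive; lra.
  - intros t ht. auto_derive; [lra | field; lra].
Qed.

Lemma rhs1_approx_is_derive (n : nat) (x : R) :
  0 < x -> is_derive (alt_approx (2 * r) (rhs1 r) Rinv n) x
             (alt_approx (2 * r) (rhs r) (fun t => - / t ^ 2) n x).
Proof.
  intro hx. apply alt_approx_is_derive; auto; [lra | |].
  - intros; apply rhs1_is_derive; lra.
  - intros t ht. auto_derive; [lra | field; lra].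
Qed.

Lemma rhs_approx_is_derive (n : nat) (x : R) :
  0 < x -> is_derive (alt_approx (2 * r) (rhs r) (fun t => - / t ^ 2) n) x
             (alt_approx (2 * r) (rhs3 r) (fun t => 2 / t ^ 3) n x).
Proof.
  intro hx. apply alt_approx_is_derive; auto; [lra | |].
  - intros; apply rhs_is_derive; lra.
  - intros t ht. auto_derive; [intro; nra | field; lra].
Qed.

End RightHandSides.

Section LogY.

Variables (r : R) (y : R -> R).
Hypothesis hr : / 2 < r.
Hypothesis hgt : forall s, 0 < s -> s < y s.
Hypothesis hfe : forall s, 0 < s -> y s * y (s + 2 * r) = (s + 1) * (s + 2 * r - 1).

Lemma ln_y_fe (t : R) : 0 < t -> ln (y t) + ln (y (t + 2 * r)) = rhs0 r t.
Proof.
  intro ht. pose proof (hgt t ht). pose proof (hgt (t + 2 * r) ltac:(lra)).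
  rewrite <- ln_mult, hfe by lra. apply ln_mult; lra.
Qed.

(* s < y s < s + 1: the upper bound is the lower bound at s + 2r, fed through the equation. *)
Lemma ln_y_sub_ln_bound (t : R) : 0 < t -> 0 < ln (y t) - ln t < / t.
Proof.
  intro ht. pose proof (hgt t ht). pose proof (hgt (t + 2 * r) ltac:(lra)).
  assert (y t < t + 1) by (pose proof (hfe t ht); nra).
  assert (ln t < ln (y t)) by (apply ln_increasing; lra).
  assert (ln (y t) < ln (t + 1)) by (apply ln_increasing; lra).
  assert (ln (t + 1) < ln t + / t).
  { rewrite <- (ln_exp (/ t)), <- ln_mult by (try lra; apply exp_pos).
    apply ln_increasing; [lra |].
    pose proof (exp_ineq1 (/ t) (Rgt_not_eq _ _ (Rinv_0_lt_compat t ht))).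
    replace (t + 1) with (t * (1 + / t)) by (field; lra). nra. }
  lra.
Qed.

Lemma alt_approx_ln_y :
  CVU_dom (alt_approx (2 * r) (rhs0 r) ln) (fun x => 0 < x) /\
  (forall x, 0 < x -> lim_fun (alt_approx (2 * r) (rhs0 r) ln) x = ln (y x)).
Proof.
  apply uniform_approx_CVU. intro eps. pose proof (cond_pos eps) as he.
  destruct (exists_nat_mul_gt (2 * (2 * r)) (1 / eps) ltac:(lra)) as [N HN].
  assert (hc : 0 < 2 * r) by lra.
  exists N. intros n x Hn hx.
  pose proof (alt_node_pos (2 * r) hc n x hx) as Ht.
  set (t := x + INR n * (2 * (2 * r))) in *.
  unfold alt_approx. fold t.
  rewrite (alt_sum_telescope (2 * r) hc (fun u => ln (y u))) by (auto; apply ln_y_fe).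
  fold t.
  pose proof (ln_y_sub_ln_bound t Ht).
  pose proof (div_lt_of_div_lt 1 t eps he Ht ltac:(pose proof (HN n Hn); unfold t; lra)).
  unfold Rdiv in *. rewrite Rmult_1_l in *.
  apply Rabs_def1; lra.
Qed.

End LogY.

Theorem lemma3 (r : R) (y : R -> R)
  (hr : / 2 < r)
  (hy : forall s, 0 < s -> is_lim_seq (cf_conv (y_num r) (2 * s)) (y s - s))
  (hpos : forall s, 0 < s -> 0 < y s)
  (hcont : forall s, 0 < s -> continuous y s)
  (hgt : forall s, 0 < s -> s < y s)
  (hfe : forall s, 0 < s -> y s * y (s + 2 * r) = (s + 1) * (s + 2 * r - 1)) :
  exists F : R -> R,
    (exists g : R -> R, forall s, 0 < s ->
        is_derive (fun t => ln (y t)) s (g s) /\ is_derive g s (F s)) /\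
    (forall s, 0 < s -> F s + F (s + 2 * r) = rhs r s) /\
    is_lim F p_infty 0 /\
    (forall f : R -> R,
        (forall s, 0 < s -> f s + f (s + 2 * r) = rhs r s) ->
        is_lim f p_infty 0 ->
        forall s, 0 < s -> f s = F s).
Proof.
  assert (hc : 0 < 2 * r) by lra.
  set (approx0 := alt_approx (2 * r) (rhs0 r) ln).
  set (approx1 := alt_approx (2 * r) (rhs1 r) Rinv).
  set (approx2 := alt_approx (2 * r) (rhs r) (fun t => - / t ^ 2)).
  set (approx3 := alt_approx (2 * r) (rhs3 r) (fun t => 2 / t ^ 3)).
  destruct (alt_approx_ln_y r y hr hgt hfe) as [C0 L0].
  pose proof (rhs1_approx_CVU r hr) as C1. pose proof (rhs_approx_CVU r hr) as C2.
  set (G := lim_fun approx1). set (F := lim_fun approx2).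
  assert (DlnY : forall s, 0 < s -> is_derive (fun t => ln (y t)) s (G s)).
  { intros s hs. apply (is_derive_ext_loc (lim_fun approx0)).
    - apply (filter_imp (fun u => 0 < u)); [exact L0 | apply locally_pos, hs].
    - apply (is_derive_lim_fun approx0 approx1 approx2); auto;
        intros; [apply rhs0_approx_is_derive | apply rhs1_approx_is_derive]; auto. }
  assert (DG : forall s, 0 < s -> is_derive G s (F s)).
  { intros. apply (is_derive_lim_fun approx1 approx2 approx3); auto;
      intros; [apply rhs1_approx_is_derive | apply rhs_approx_is_derive]; auto. }
  assert (FE1 : forall s, 0 < s -> G s + G (s + 2 * r) = rhs1 r s)
    by (apply (is_derive_fe (fun t => ln (y t)) G (rhs0 r)); auto;
        [intros; apply rhs0_is_derive; lra | apply ln_y_fe; auto]).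
  assert (FE : forall s, 0 < s -> F s + F (s + 2 * r) = rhs r s)
    by (apply (is_derive_fe G F (rhs1 r)); auto; intros; apply rhs1_is_derive; lra).
  assert (FL : is_lim F p_infty 0).
  { apply (is_lim_p_infty_0_of_bound F (5 * 2)). intros s hs.
    apply (lim_fun_abs_le _ (fun x => 0 < x)); [exact C2 | lra |].
    intro n. apply rhs_approx_abs_le; auto. }
  exists F. split; [exists G; auto |]. split; [exact FE |]. split; [exact FL |].
  intros f Hf Hfl s hs. apply Rminus_diag_uniq.
  apply (antiperiodic_vanishing (fun t => f t - F t) (2 * r) hc); auto.
  - intros t ht. pose proof (Hf t ht). pose proof (FE t ht). lra.
  - pose proof (is_lim_minus' f F p_infty 0 0 Hfl FL) as H. rewrite Rminus_0_r in H. exact H.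
Qed.
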